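(* Consider an instance of additive multislope ski rental with states $0,\dots,k$, buying costs $b_0<b_1<\dots<b_k$ and rental rates $r_0>r_1>\dots>r_k\ge 0$, such that $s_1<s_2<\dots<s_k$ where $s_i=\frac{b_i-b_{i-1}}{r_{i-1}-r_i}$. Let $c\ge 1$. If there exists a $c$-competitive profile $p$ all of whose component functions $p_0,\dots,p_k$ are continuous, then there exists a prudent $c$-competitive profile $\tilde p$.
   Context: A profile is a vector $p(t)=(p_0(t),\dots,p_k(t))$ of nonnegative functions of $t\ge0$ with $\sum_{i=0}^kp_i(t)=1$ for all $t$ ($p_i(t)$ is the probability of being in state $i$ at time $t$). Its expected buying cost is $B_p(t)=\sum_ip_i(t)b_i$, its expected rental rate is $R_p(t)=\sum_ip_i(t)r_i$, and its expected total cost is $X_p(t)=B_p(t)+\int_0^tR_p(z)\,dz$. With $\textsc{opt}(t)=\min_i(b_i+r_it)$, a profile is $c$-competitive if $X_p(t)\le c\cdot\textsc{opt}(t)$ for all $t\ge0$. Slope $i$ is active at time $t$ if $p_i(t)>0$; a profile is prudent if at every time $t$ the set of active slopes consists of either one slope or two consecutive slopes $i,i+1$. *)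

From Stdlib Require Import Reals Lra.
From Coquelicot Require Import Coquelicot.
Open Scope R_scope.

(* A profile is p : nat -> R -> R, with p i t the probability of state i at time t.
   Only indices 0..k and times t >= 0 are relevant. *)

Definition is_profile (k : nat) (p : nat -> R -> R) : Prop :=
  forall t, 0 <= t ->
    (forall i, (i <= k)%nat -> 0 <= p i t) /\
    sum_f_R0 (fun i => p i t) k = 1.

Definition Bcost (k : nat) (b : nat -> R) (p : nat -> R -> R) (t : R) : R :=
  sum_f_R0 (fun i => p i t * b i) k.

Definition Rrate (k : nat) (r : nat -> R) (p : nat -> R -> R) (t : R) : R :=
  sum_f_R0 (fun i => p i t * r i) k.

Definition Xcost (k : nat) (b r : nat -> R) (p : nat -> R -> R) (t : R) : R :=
  Bcost k b p t + RInt (Rrate k r p) 0 t.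

Fixpoint minUpTo (f : nat -> R) (n : nat) : R :=
  match n with
  | O => f O
  | S m => Rmin (minUpTo f m) (f (S m))
  end.

Definition OPT (k : nat) (b r : nat -> R) (t : R) : R :=
  minUpTo (fun i => b i + r i * t) k.

Definition competitive (k : nat) (b r : nat -> R) (c : R) (p : nat -> R -> R) : Prop :=
  is_profile k p /\ forall t, 0 <= t -> Xcost k b r p t <= c * OPT k b r t.

(* slope i active at t iff p_i(t) > 0; prudent iff active slopes at every time
   are a single slope or two consecutive slopes, i.e. contained in {j, j+1}. *)
Definition prudent (k : nat) (p : nat -> R -> R) : Prop :=
  forall t, 0 <= t -> exists j, (j <= k)%nat /\
    forall i, (i <= k)%nat -> 0 < p i t -> (i = j \/ i = S j).

Definition continuous_nonneg (f : R -> R) : Prop :=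
  forall t, 0 <= t -> filterlim f (within (fun x => 0 <= x) (locally t)) (locally (f t)).

Definition s_ratio (b r : nat -> R) (i : nat) : R :=
  (b i - b (i - 1)%nat) / (r (i - 1)%nat - r i).

From Stdlib Require Import Reals Lra Lia.
From Coquelicot Require Import Coquelicot.
Open Scope R_scope.

(* At each time t, replace p(t) by the distribution on the two consecutive states
   j, j+1 with b_j <= B_p(t) <= b_{j+1} that has the same expected buying cost.
   Since s_i increases, the points (b_i, r_i) form a convex chain: each lies above
   the line through two consecutive ones.  Hence any distribution with buying cost
   B_p(t) has rental rate at least that of the two-state one, so the new profile has
   the same B and a smaller R, thus a smaller X, and it is prudent by construction.
   Continuity of p makes B_p, hence the new weights, continuous and integrable. *)

Lemma continuous_Rplus (f g : R -> R) x :
  continuous f x -> continuous g x -> continuous (fun y => f y + g y) x.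
Proof. exact (continuous_plus f g x). Qed.

Lemma continuous_Rminus (f g : R -> R) x :
  continuous f x -> continuous g x -> continuous (fun y => f y - g y) x.
Proof. exact (continuous_minus f g x). Qed.

Lemma continuous_Rmult_const (f : R -> R) (a x : R) :
  continuous f x -> continuous (fun y => f y * a) x.
Proof. intros Hf. exact (continuous_mult f (fun _ => a) x Hf (continuous_const a x)). Qed.

(* [clamp01 y = Rmin 1 (Rmax 0 y)]; the closed form makes continuity immediate. *)
Definition clamp01 (y : R) : R := (1 + Rabs y - Rabs (y - 1)) / 2.

Lemma continuous_clamp01 x : continuous clamp01 x.
Proof.
  apply continuous_Rmult_const, continuous_Rminus; [apply continuous_Rplus|].
  - apply continuous_const.
  - apply continuous_Rabs.
  - apply continuous_Rabs_comp, continuous_Rminus; [apply continuous_id | apply continuous_const].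
Qed.

Lemma clamp01_id y : 0 <= y <= 1 -> clamp01 y = y.
Proof. intros; unfold clamp01, Rabs; repeat destruct Rcase_abs; lra. Qed.

Lemma clamp01_nonpos y : y <= 0 -> clamp01 y = 0.
Proof. intros; unfold clamp01, Rabs; repeat destruct Rcase_abs; lra. Qed.

Lemma clamp01_ge1 y : 1 <= y -> clamp01 y = 1.
Proof. intros; unfold clamp01, Rabs; repeat destruct Rcase_abs; lra. Qed.

(* Continuity on [0, +oo) is continuity of the even extension, which is the form
   Coquelicot's integrability criterion can use at the endpoint 0. *)
Definition continuous_even_ext (f : R -> R) : Prop :=
  forall x, continuous (fun y => f (Rabs y)) x.

Lemma continuous_nonneg_even_ext f : continuous_nonneg f -> continuous_even_ext f.
Proof.
  intros Hf x. eapply filterlim_comp; [|apply (Hf (Rabs x) (Rabs_pos x))].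
  intros P HP. change (locally x (fun y => P (Rabs y))).
  apply (filter_imp (fun y => 0 <= Rabs y -> P (Rabs y))).
  - intros y H; apply H, Rabs_pos.
  - exact (continuous_Rabs x _ HP).
Qed.

Lemma continuous_even_ext_ex_RInt f t : continuous_even_ext f -> 0 <= t -> ex_RInt f 0 t.
Proof.
  intros Hf Ht. apply ex_RInt_ext with (fun y => f (Rabs y)).
  - intros y [Hy _]. rewrite Rmin_left in Hy by lra. rewrite Rabs_pos_eq; lra.
  - apply (@ex_RInt_continuous R_CompleteNormedModule); intros; apply Hf.
Qed.

Lemma continuous_even_ext_comp (G f : R -> R) :
  (forall x, continuous G x) -> continuous_even_ext f ->
  continuous_even_ext (fun t => G (f t)).
Proof. intros HG Hf x. apply (continuous_comp (fun y => f (Rabs y)) G); auto. Qed.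

Lemma continuous_even_ext_minus (f g : R -> R) :
  continuous_even_ext f -> continuous_even_ext g ->
  continuous_even_ext (fun t => f t - g t).
Proof. intros Hf Hg x. apply continuous_Rminus; auto. Qed.

Lemma continuous_even_ext_weighted_sum (g : nat -> R -> R) (w : nat -> R) n :
  (forall i, (i <= n)%nat -> continuous_even_ext (g i)) ->
  continuous_even_ext (fun t => sum_f_R0 (fun i => g i t * w i) n).
Proof.
  induction n as [|n IH]; intros Hg x; simpl.
  - apply continuous_Rmult_const, Hg; lia.
  - apply continuous_Rplus.
    + apply IH; intros; apply Hg; lia.
    + apply continuous_Rmult_const, Hg; lia.
Qed.

Lemma sum_f_R0_two (f : nat -> R) n j : (S j <= n)%nat ->
  (forall i, (i <= n)%nat -> i <> j -> i <> S j -> f i = 0) ->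
  sum_f_R0 f n = f j + f (S j).
Proof.
  induction n as [|n IH]; intros Hj Hf; [lia|]. simpl.
  destruct (Nat.eq_dec j n) as [->|Hjn].
  - destruct n as [|n]; simpl; [ring|].
    rewrite sum_eq_R0 by (intros; apply Hf; lia). ring.
  - rewrite IH, (Hf (S n)) by (lia || (intros; apply Hf; lia)). ring.
Qed.

Lemma sum_f_R0_affine (w g : nat -> R) (A B : R) n :
  sum_f_R0 (fun i => w i * (A + B * g i)) n =
  A * sum_f_R0 w n + B * sum_f_R0 (fun i => w i * g i) n.
Proof. induction n as [|n IH]; simpl; [|rewrite IH]; ring. Qed.

Lemma le_of_le_succ (u : nat -> R) n :
  (forall i, (i < n)%nat -> u i <= u (S i)) ->
  forall i j, (i <= j)%nat -> (j <= n)%nat -> u i <= u j.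
Proof.
  intros Hu i j Hij. induction Hij as [|j Hij IH]; intros Hj; [lra|].
  apply Rle_trans with (u j); [apply IH | apply Hu]; lia.
Qed.

Section SupportingLines.

Variable k : nat.
Variables b r : nat -> R.
Hypothesis Hb : forall i, (i < k)%nat -> b i < b (S i).
Hypothesis Hr : forall i, (i < k)%nat -> r (S i) < r i.
Hypothesis Hs : forall i, (1 <= i)%nat -> (i < k)%nat -> s_ratio b r i < s_ratio b r (S i).

Lemma b_monotone i j : (i <= j)%nat -> (j <= k)%nat -> b i <= b j.
Proof. apply (le_of_le_succ b k). intros m Hm. apply Rlt_le, Hb, Hm. Qed.

Definition segment_slope (m : nat) : R := (r m - r (S m)) / (b (S m) - b m).

Lemma r_succ_segment m : (m < k)%nat ->
  r (S m) = r m - segment_slope m * (b (S m) - b m).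
Proof. intros Hm. unfold segment_slope. pose proof (Hb m Hm). field. lra. Qed.

Lemma segment_slope_s_ratio m : (m < k)%nat -> segment_slope m = / s_ratio b r (S m).
Proof.
  intros Hm. unfold segment_slope, s_ratio. replace (S m - 1)%nat with m by lia.
  pose proof (Hb m Hm). pose proof (Hr m Hm). field. lra.
Qed.

Lemma s_ratio_pos m : (m < k)%nat -> 0 < s_ratio b r (S m).
Proof.
  intros Hm. unfold s_ratio. replace (S m - 1)%nat with m by lia.
  pose proof (Hb m Hm). pose proof (Hr m Hm). apply Rdiv_lt_0_compat; lra.
Qed.

Lemma segment_slope_antitone m n : (m <= n)%nat -> (n < k)%nat ->
  segment_slope n <= segment_slope m.
Proof.
  intros Hmn Hn. apply Ropp_le_cancel.
  apply (le_of_le_succ (fun i => - segment_slope i) (k - 1)); try lia.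
  intros i Hi. apply Ropp_le_contravar.
  rewrite !segment_slope_s_ratio by lia.
  apply Rlt_le, Rinv_lt_contravar.
  - apply Rmult_lt_0_compat; apply s_ratio_pos; lia.
  - apply Hs; lia.
Qed.

Lemma r_above_segment_line j i : (j < k)%nat -> (i <= k)%nat ->
  r j - segment_slope j * (b i - b j) <= r i.
Proof.
  intros Hj Hi. destruct (Nat.le_ge_cases j i) as [Hji|Hij].
  - revert Hi. induction Hji as [|m Hjm IH]; intros Hm; [lra|].
    rewrite r_succ_segment by lia.
    assert (Hslope : segment_slope m <= segment_slope j) by (apply segment_slope_antitone; lia).
    assert (Hstep : b m < b (S m)) by (apply Hb; lia).
    assert (0 <= (segment_slope j - segment_slope m) * (b (S m) - b m))
      by (apply Rmult_le_pos; lra).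
    specialize (IH ltac:(lia)). nra.
  - revert Hj. induction Hij as [|m Him IH]; intros Hm; [lra|].
    rewrite r_succ_segment by lia.
    assert (Hslope : segment_slope (S m) <= segment_slope m) by (apply segment_slope_antitone; lia).
    assert (Hbi : b i <= b (S m)) by (apply b_monotone; lia).
    assert (0 <= (segment_slope m - segment_slope (S m)) * (b (S m) - b i))
      by (apply Rmult_le_pos; lra).
    specialize (IH ltac:(lia)). nra.
Qed.

Lemma weighted_rate_ge_segment_line (w : nat -> R) j : (j < k)%nat ->
  (forall i, (i <= k)%nat -> 0 <= w i) -> sum_f_R0 w k = 1 ->
  r j - segment_slope j * (sum_f_R0 (fun i => w i * b i) k - b j)
    <= sum_f_R0 (fun i => w i * r i) k.
Proof.
  intros Hj Hw Hsum.
  apply Rle_trans with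
    (sum_f_R0 (fun i => w i * ((r j + segment_slope j * b j) + - segment_slope j * b i)) k).
  - rewrite sum_f_R0_affine, Hsum. lra.
  - apply sum_Rle. intros i Hi. apply Rmult_le_compat_l; [auto|].
    pose proof (r_above_segment_line j i Hj Hi). lra.
Qed.

End SupportingLines.

Section Interpolation.

Variable k : nat.
Variable b : nat -> R.
Hypothesis Hb : forall i, (i < k)%nat -> b i < b (S i).

Definition interp_ratio (j : nat) (x : R) : R := (x - b j) / (b (S j) - b j).

(* The mass on states [>= j] of the two-state profile with buying cost [x];
   taking weights as differences of these clamped ratios keeps them continuous in [x]. *)
Definition upper_mass (j : nat) (x : R) : R :=
  match j with
  | O => 1
  | S m => if Compare_dec.lt_dec m k then clamp01 (interp_ratio m x) else 0
  end.

Definition interp_weight (x : R) (i : nat) : R := upper_mass i x - upper_mass (S i) x.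

Lemma continuous_upper_mass j x : continuous (upper_mass j) x.
Proof.
  destruct j as [|m]; unfold upper_mass; [apply continuous_const|].
  destruct (Compare_dec.lt_dec m k); [|apply continuous_const].
  apply (continuous_comp (interp_ratio m) clamp01), continuous_clamp01.
  apply continuous_Rmult_const, continuous_Rminus; [apply continuous_id | apply continuous_const].
Qed.

Lemma interp_ratio_scaled j x : (j < k)%nat ->
  interp_ratio j x * (b (S j) - b j) = x - b j.
Proof. intros Hj. specialize (Hb j Hj). unfold interp_ratio. field. lra. Qed.

Lemma interp_ratio_bounds j x : (j < k)%nat -> b j <= x <= b (S j) ->
  0 <= interp_ratio j x <= 1.
Proof.
  intros Hj Hx. pose proof (interp_ratio_scaled j x Hj). pose proof (Hb j Hj). nra.
Qed.

Lemma bracket_exists x : (1 <= k)%nat -> b 0 <= x <= b k ->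
  exists j, (j < k)%nat /\ b j <= x <= b (S j).
Proof.
  intros Hk Hx.
  enough (forall n, (1 <= n <= k)%nat -> x <= b n ->
            exists j, (j < n)%nat /\ b j <= x <= b (S j)) as H by (apply H; lia || lra).
  induction n as [|n IH]; intros Hn Hxn; [lia|].
  destruct (Nat.eq_dec n 0) as [->|Hn0]; [exists 0%nat; split; [lia|lra]|].
  destruct (Rle_dec x (b n)).
  - destruct IH as [j [Hj Hjx]]; [lia|auto|]. exists j; split; [lia|auto].
  - exists n; split; [lia|lra].
Qed.

Lemma interp_weight_bracket j x : (j < k)%nat -> b j <= x <= b (S j) ->
  (forall i, i <> j -> i <> S j -> interp_weight x i = 0) /\
  interp_weight x j = 1 - interp_ratio j x /\
  interp_weight x (S j) = interp_ratio j x.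
Proof.
  intros Hj Hx.
  assert (Hlow : forall i, (i <= j)%nat -> upper_mass i x = 1).
  { intros [|i] Hi; simpl; [reflexivity|].
    destruct (Compare_dec.lt_dec i k); [|lia].
    pose proof (interp_ratio_scaled i x ltac:(lia)). assert (b i < b (S i)) by (apply Hb; lia).
    assert (b (S i) <= b j) by (apply (b_monotone k b Hb); lia).
    apply clamp01_ge1. nra. }
  assert (Hhigh : forall i, (S (S j) <= i)%nat -> upper_mass i x = 0).
  { intros [|i] Hi; simpl; [lia|].
    destruct (Compare_dec.lt_dec i k); [|reflexivity].
    pose proof (interp_ratio_scaled i x ltac:(lia)). assert (b i < b (S i)) by (apply Hb; lia).
    assert (b (S j) <= b i) by (apply (b_monotone k b Hb); lia).
    apply clamp01_nonpos. nra. }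
  assert (Hmid : upper_mass (S j) x = interp_ratio j x).
  { simpl. destruct (Compare_dec.lt_dec j k); [|lia].
    apply clamp01_id, interp_ratio_bounds; auto. }
  unfold interp_weight. split; [|split].
  - intros i Hij HiSj. destruct (Nat.lt_ge_cases i j).
    + rewrite !Hlow by lia. ring.
    + rewrite !Hhigh by lia. ring.
  - rewrite Hlow, Hmid by lia. ring.
  - rewrite Hmid, Hhigh by lia. ring.
Qed.

Lemma interp_weight_sum j x (w : nat -> R) : (j < k)%nat -> b j <= x <= b (S j) ->
  sum_f_R0 (fun i => interp_weight x i * w i) k =
  (1 - interp_ratio j x) * w j + interp_ratio j x * w (S j).
Proof.
  intros Hj Hx. destruct (interp_weight_bracket j x Hj Hx) as [H0 [Hwj HwSj]].
  rewrite (sum_f_R0_two _ k j) by (lia || (intros i _ ? ?; rewrite H0; auto; ring)).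
  rewrite Hwj, HwSj. ring.
Qed.


Hypothesis Hk : (1 <= k)%nat.
Variable p : nat -> R -> R.
Hypothesis Hprof : is_profile k p.

Definition interp_profile (i : nat) (t : R) : R := interp_weight (Bcost k b p t) i.

Lemma Bcost_bounds t : 0 <= t -> b 0 <= Bcost k b p t <= b k.
Proof.
  intros Ht. destruct (Hprof t Ht) as [Hpos Hsum]. unfold Bcost. split.
  - replace (b 0%nat) with (sum_f_R0 (fun i => p i t * (b 0%nat + 0 * b i)) k)
      by (rewrite sum_f_R0_affine, Hsum; ring).
    apply sum_Rle. intros i Hi. apply Rmult_le_compat_l; [auto|].
    pose proof (b_monotone k b Hb 0 i ltac:(lia) Hi). lra.
  - replace (b k) with (sum_f_R0 (fun i => p i t * (b k + 0 * b i)) k)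
      by (rewrite sum_f_R0_affine, Hsum; ring).
    apply sum_Rle. intros i Hi. apply Rmult_le_compat_l; [auto|].
    pose proof (b_monotone k b Hb i k Hi (le_n k)). lra.
Qed.

Lemma interp_profile_bracket t : 0 <= t ->
  exists j, (j < k)%nat /\ b j <= Bcost k b p t <= b (S j).
Proof. intros Ht. apply bracket_exists, Bcost_bounds; auto. Qed.

Lemma interp_profile_is_profile : is_profile k interp_profile.
Proof.
  intros t Ht. destruct (interp_profile_bracket t Ht) as [j [Hj Hx]].
  destruct (interp_weight_bracket j _ Hj Hx) as [H0 [Hwj HwSj]].
  pose proof (interp_ratio_bounds j _ Hj Hx). unfold interp_profile. split.
  - intros i _. destruct (Nat.eq_dec i j) as [->|Hij]; [rewrite Hwj; lra|].
    destruct (Nat.eq_dec i (S j)) as [->|HiSj]; [rewrite HwSj; lra|].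
    rewrite H0 by auto. lra.
  - rewrite (sum_f_R0_two _ k j) by (lia || (intros; apply H0; auto)).
    rewrite Hwj, HwSj. ring.
Qed.

Lemma interp_profile_prudent : prudent k interp_profile.
Proof.
  intros t Ht. destruct (interp_profile_bracket t Ht) as [j [Hj Hx]].
  destruct (interp_weight_bracket j _ Hj Hx) as [H0 _].
  exists j. split; [lia|]. intros i _ Hpos.
  destruct (Nat.eq_dec i j); [auto|]. destruct (Nat.eq_dec i (S j)); [auto|].
  unfold interp_profile in Hpos. rewrite H0 in Hpos by auto. lra.
Qed.

Lemma Bcost_interp_profile t : 0 <= t -> Bcost k b interp_profile t = Bcost k b p t.
Proof.
  intros Ht. destruct (interp_profile_bracket t Ht) as [j [Hj Hx]].
  unfold Bcost at 1, interp_profile. rewrite (interp_weight_sum j _ b Hj Hx).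
  pose proof (interp_ratio_scaled j (Bcost k b p t) Hj). nra.
Qed.

Variable r : nat -> R.
Hypothesis Hr : forall i, (i < k)%nat -> r (S i) < r i.
Hypothesis Hs : forall i, (1 <= i)%nat -> (i < k)%nat -> s_ratio b r i < s_ratio b r (S i).

Lemma Rrate_interp_profile_le t : 0 <= t -> Rrate k r interp_profile t <= Rrate k r p t.
Proof.
  intros Ht. destruct (interp_profile_bracket t Ht) as [j [Hj Hx]].
  destruct (Hprof t Ht) as [Hpos Hsum].
  unfold Rrate at 1, interp_profile. rewrite (interp_weight_sum j _ r Hj Hx).
  eapply Rle_trans; [|apply (weighted_rate_ge_segment_line k b r Hb Hr Hs _ j Hj Hpos Hsum)].
  fold (Bcost k b p t). rewrite (r_succ_segment k b r Hb j Hj).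
  pose proof (interp_ratio_scaled j (Bcost k b p t) Hj). nra.
Qed.

Hypothesis Hpcont : forall i, (i <= k)%nat -> continuous_even_ext (p i).

Lemma continuous_even_ext_interp_profile i : continuous_even_ext (interp_profile i).
Proof.
  assert (HB : continuous_even_ext (Bcost k b p))
    by (apply continuous_even_ext_weighted_sum, Hpcont).
  apply continuous_even_ext_minus; apply continuous_even_ext_comp; auto;
    apply continuous_upper_mass.
Qed.

Lemma Xcost_interp_profile_le t : 0 <= t -> Xcost k b r interp_profile t <= Xcost k b r p t.
Proof.
  intros Ht. unfold Xcost. rewrite Bcost_interp_profile by auto.
  apply Rplus_le_compat_l, RInt_le; auto.
  - apply continuous_even_ext_ex_RInt; auto.
    apply continuous_even_ext_weighted_sum. intros; apply continuous_even_ext_interp_profile.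
  - apply continuous_even_ext_ex_RInt; auto. apply continuous_even_ext_weighted_sum, Hpcont.
  - intros y Hy. apply Rrate_interp_profile_le. lra.
Qed.

End Interpolation.

Theorem theorem4p1 (k : nat) (b r : nat -> R) (c : R)
  (Hb : forall i, (i < k)%nat -> b i < b (S i))
  (Hr : forall i, (i < k)%nat -> r (S i) < r i)
  (Hrk : 0 <= r k)
  (Hs : forall i, (1 <= i)%nat -> (i < k)%nat -> s_ratio b r i < s_ratio b r (S i))
  (Hc : 1 <= c)
  (p : nat -> R -> R)
  (Hpcont : forall i, (i <= k)%nat -> continuous_nonneg (p i))
  (Hp : competitive k b r c p) :
  exists q : nat -> R -> R,
    (forall i t, (i <= k)%nat -> 0 <= t -> ex_RInt (q i) 0 t) /\
    prudent k q /\ competitive k b r c q.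
Proof.
  destruct Hp as [Hprof Hcomp].
  assert (Hcont : forall i, (i <= k)%nat -> continuous_even_ext (p i))
    by (intros; apply continuous_nonneg_even_ext; auto).
  destruct (Nat.eq_dec k 0) as [->|Hk0].
  - exists p. split; [|split; [|split; auto]].
    + intros; apply continuous_even_ext_ex_RInt; auto.
    + intros t _. exists 0%nat. split; [lia|]. intros i Hi _. lia.
  - assert (Hk : (1 <= k)%nat) by lia.
    exists (interp_profile k b p). split; [|split; [|split]].
    + intros i t _ Ht. apply continuous_even_ext_ex_RInt; [|exact Ht].
      apply continuous_even_ext_interp_profile, Hcont.
    + apply interp_profile_prudent; auto.
    + apply interp_profile_is_profile; auto.
    + intros t Ht. apply Rle_trans with (Xcost k b r p t);
        [apply Xcost_interp_profile_le | apply Hcomp]; auto.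
Qed.
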